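(* Let $S\subseteq\mathbb{N}^{\mathbb{N}}$. Suppose that for every finite sequence $g\in\mathbb{N}^{<\mathbb{N}}$ there are sequences $g_1,g_2\in\mathbb{N}^{\mathbb{N}}$, both extending $g$, with $g_1\in S$ and $g_2\notin S$. Then $S$ is not guessable.
   Context: $\mathbb{N}^{\mathbb{N}}$ is the set of all sequences $f:\mathbb{N}\to\mathbb{N}$ and $\mathbb{N}^{<\mathbb{N}}$ is the set of all finite sequences of naturals. A function $G:\mathbb{N}^{<\mathbb{N}}\to\{0,1\}$ is a guesser for $S\subseteq\mathbb{N}^{\mathbb{N}}$ if for every $f:\mathbb{N}\to\mathbb{N}$ there is some $m>0$ such that for all $n>m$, $G(f(0),\ldots,f(n))=1$ if $f\in S$ and $G(f(0),\ldots,f(n))=0$ if $f\notin S$. A set $S$ is guessable if it has a guesser. *)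

From Stdlib Require Import List Arith.
Import ListNotations.

Definition prefix (f : nat -> nat) (n : nat) : list nat := map f (seq 0 n).

Definition extends (f : nat -> nat) (g : list nat) : Prop :=
  forall i, i < length g -> f i = nth i g 0.

(* G : N^{<N} -> {0,1}; we encode {0,1} as bool (true = 1, false = 0). *)
Definition guesser (G : list nat -> bool) (A : (nat -> nat) -> Prop) : Prop :=
  forall f : nat -> nat, exists m, 0 < m /\
    forall n, m < n ->
      (A f -> G (prefix f (Nat.succ n)) = true) /\
      (~ A f -> G (prefix f (Nat.succ n)) = false).

Definition guessable (A : (nat -> nat) -> Prop) : Prop :=
  exists G, guesser G A.

(** A guesser must eventually settle on a single answer along every sequence.
    Density of [S] and of its complement lets us build, by choosing longer and
    longer finite sequences, an [f] whose initial segments are guessed [true]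
    and [false] alternately, infinitely often. *)

From Stdlib Require Import List Arith Lia Bool ClassicalEpsilon.
Import ListNotations.

Lemma prefix_length (f : nat -> nat) (n : nat) : length (prefix f n) = n.
Proof. unfold prefix. now rewrite length_map, length_seq. Qed.

Lemma prefix_nth (f : nat -> nat) (n i : nat) :
  i < n -> nth i (prefix f n) 0 = f i.
Proof.
  intros Hi. unfold prefix.
  rewrite nth_indep with (d' := f 0) by now rewrite length_map, length_seq.
  now rewrite map_nth, seq_nth.
Qed.

Lemma prefix_of_extends (f : nat -> nat) (p : list nat) :
  extends f p -> prefix f (length p) = p.
Proof.
  intros Hf. apply nth_ext with (d := 0) (d' := 0); rewrite prefix_length; [easy|].
  intros i Hi. rewrite prefix_nth by easy. now apply Hf.
Qed.

Definition strictly_extends (q p : list nat) : Prop :=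
  length p < length q /\ forall i, i < length p -> nth i q 0 = nth i p 0.

Lemma strictly_extends_prefix (f : nat -> nat) (p : list nat) (n : nat) :
  extends f p -> length p <= n -> strictly_extends (prefix f (S n)) p.
Proof.
  intros Hf Hn. split; rewrite ?prefix_length; [lia|].
  intros i Hi. rewrite prefix_nth by lia. now apply Hf.
Qed.

Section ChainLimit.

Variable P : nat -> list nat.
Hypothesis P_chain : forall k, strictly_extends (P (S k)) (P k).

Lemma chain_length (k : nat) : k <= length (P k).
Proof. induction k as [|k IH]; [lia|]. destruct (P_chain k). lia. Qed.

Lemma chain_length_le (k j : nat) : k <= j -> length (P k) <= length (P j).
Proof. induction 1 as [|j _ IH]; [easy|]. destruct (P_chain j). lia. Qed.

Lemma chain_nth_stable (k j i : nat) :
  k <= j -> i < length (P k) -> nth i (P j) 0 = nth i (P k) 0.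
Proof.
  intros Hkj Hi. induction Hkj as [|j Hkj IH]; [easy|].
  pose proof (chain_length_le k j Hkj).
  destruct (P_chain j) as [_ Hnth]. rewrite Hnth by lia. exact IH.
Qed.

Definition chain_limit (i : nat) : nat := nth i (P (S i)) 0.

Lemma extends_chain_limit (k : nat) : extends chain_limit (P k).
Proof.
  intros i Hi. unfold chain_limit.
  assert (i < length (P (S i))) by (pose proof (chain_length (S i)); lia).
  destruct (Nat.le_ge_cases k (S i)) as [Hk|Hk].
  - now apply chain_nth_stable.
  - now rewrite <- (chain_nth_stable (S i) k i).
Qed.

End ChainLimit.

(* Decidability of equality on [bool] replaces excluded middle for [A f]. *)
Lemma guesser_stabilizes (G : list nat -> bool) (A : (nat -> nat) -> Prop)
    (f : nat -> nat) :
  guesser G A -> exists m, forall n n', m < n -> m < n' ->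
    G (prefix f (S n)) = G (prefix f (S n')).
Proof.
  intros HG. destruct (HG f) as [m [_ Hm]]. exists m. intros n n' Hn Hn'.
  destruct (bool_dec (G (prefix f (S n))) (G (prefix f (S n')))) as [|Hneq]; [easy|].
  destruct (Hm n Hn) as [Hin Hout], (Hm n' Hn') as [Hin' Hout'].
  unfold Nat.succ in *.
  assert (HnotA : ~ A f) by (intros HA; apply Hneq; now rewrite Hin, Hin').
  now rewrite Hout, Hout'.
Qed.

Section Diagonal.

Variable A : (nat -> nat) -> Prop.
Variable G : list nat -> bool.
Hypothesis A_dense : forall g : list nat,
  exists g1 g2 : nat -> nat, extends g1 g /\ extends g2 g /\ A g1 /\ ~ A g2.
Hypothesis G_guesser : guesser G A.

Lemma guessed_extension (p : list nat) (b : bool) :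
  exists q, strictly_extends q p /\ G q = b.
Proof.
  destruct (A_dense p) as [g1 [g2 [Hg1 [Hg2 [HA1 HA2]]]]].
  set (g := if b then g1 else g2).
  destruct (G_guesser g) as [m [_ Hm]].
  set (n := Nat.max m (length p) + 1).
  exists (prefix g (S n)). split.
  - apply strictly_extends_prefix; [now destruct b | lia].
  - destruct (Hm n ltac:(lia)) as [Hin Hout]. destruct b; auto.
Qed.

Definition next_guessed (p : list nat) (b : bool) : list nat :=
  proj1_sig (constructive_indefinite_description _ (guessed_extension p b)).

Lemma next_guessed_spec (p : list nat) (b : bool) :
  strictly_extends (next_guessed p b) p /\ G (next_guessed p b) = b.
Proof. unfold next_guessed. now destruct constructive_indefinite_description. Qed.

Fixpoint alternating (k : nat) : list nat :=
  match k with
  | 0 => []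
  | S k => next_guessed (alternating k) (Nat.even k)
  end.

Lemma alternating_chain (k : nat) :
  strictly_extends (alternating (S k)) (alternating k).
Proof. apply next_guessed_spec. Qed.

Lemma guess_alternating (k : nat) : G (alternating (S k)) = Nat.even k.
Proof. apply next_guessed_spec. Qed.

Lemma guess_limit_prefix (k : nat) : exists n, k <= n /\
  G (prefix (chain_limit alternating) (S n)) = Nat.even k.
Proof.
  pose proof (chain_length alternating alternating_chain (S k)) as Hlen.
  destruct (length (alternating (S k))) as [|n] eqn:Elen; [lia|].
  exists n. split; [lia|].
  rewrite <- Elen, prefix_of_extends by apply extends_chain_limit, alternating_chain.
  apply guess_alternating.
Qed.

Lemma dense_guesser_absurd : False.
Proof.
  destruct (guesser_stabilizes G A (chain_limit alternating) G_guesser) as [m Hm].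
  destruct (guess_limit_prefix (S m)) as [n [Hn Gn]].
  destruct (guess_limit_prefix (S (S m))) as [n' [Hn' Gn']].
  pose proof (Hm n n' ltac:(lia) ltac:(lia)) as Hsame.
  rewrite Gn, Gn', Nat.even_succ_succ, Nat.even_succ, <- Nat.negb_even in Hsame.
  destruct (Nat.even m); discriminate.
Qed.

End Diagonal.

Theorem theorem2p2 (S : (nat -> nat) -> Prop) :
  (forall g : list nat,
     exists g1 g2 : nat -> nat,
       extends g1 g /\ extends g2 g /\ S g1 /\ ~ S g2) ->
  ~ guessable S.
Proof.
  intros S_dense [G HG]. exact (dense_guesser_absurd S G S_dense HG).
Qed.
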